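(* Let $n\in\mathbb{N}$, $n\ge1$. Let $H_n=\{0,1\}^n$ with the $\ell_1$ metric $d$, enumerated as $H_n=\{b_{n,i}:i=0,1,\ldots,2^n-1\}$ where $b_{n,i}$ is the $n$-digit binary representation of $i$ (most significant digit first). Let $D_n=[d(b_{n,i},b_{n,j})]_{0\le i,j\le 2^n-1}$ and let $O_n$ be the $2^n\times 2^n$ all-ones matrix. For $0\le j\le i$, let $\mathbb{1}_{i,j}\in\mathbb{R}^{2^i}$ be the vector whose first $2^j$ coordinates equal $1$, the next $2^j$ coordinates equal $-1$, the next $2^j$ equal $1$, and so on alternately. Let $A_n$ be the $(n+1)\times 2^n$ matrix with rows $\mathbb{1}_{n,n}^T,\mathbb{1}_{n,n-1}^T,\ldots,\mathbb{1}_{n,0}^T$. Then: (1) $D_1=\begin{bmatrix}0&1\\1&0\end{bmatrix}$ and $D_{n+1}=\begin{bmatrix}D_n & D_n+O_n\\ D_n+O_n & D_n\end{bmatrix}$. (2) $D_n\mathbb{1}_{n,n}=n2^{n-1}\mathbb{1}_{n,n}$ and $D_n\mathbb{1}_{n,i}=-2^{n-1}\mathbb{1}_{n,i}$ for all $i=0,1,\ldots,n-1$. (3) With $V_n=\operatorname{Span}\{\mathbb{1}_{n,i}:i=0,1,\ldots,n\}$, the column space of $D_n$ equals $V_n$. (4) $N(A_n)=N(D_n)=V_n^\perp$, where $N(\cdot)$ denotes the null space. *)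

From mathcomp Require Import all_boot all_order all_algebra.
Unset Printing Implicit Defensive.
Import Order.TTheory GRing.Theory Num.Theory.
Local Open Scope ring_scope.

(* k-th binary digit (k = 0 is the most significant) of the n-digit
   binary representation b_{n,i} of i. *)
Definition bdigit (n i : nat) (k : 'I_n) : bool := odd (i %/ 2 ^ (n.-1 - k))%N.

(* l1 (= Hamming) distance between b_{n,i} and b_{n,j}. *)
Definition hdist (n i j : nat) : nat :=
  (\sum_(k < n) nat_of_bool (bdigit n i k != bdigit n j k))%N.

Definition Dmx (R : pzRingType) (n : nat) : 'M[R]_(2 ^ n) :=
  \matrix_(i < 2 ^ n, j < 2 ^ n) (hdist n i j)%:R.

Definition Omx (R : pzRingType) (n : nat) : 'M[R]_(2 ^ n) := const_mx 1.

(* the vector 1_{i,j} in R^{2^i}: blocks of 2^j ones, -ones, ... *)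
Definition onev (R : pzRingType) (i j : nat) : 'cV[R]_(2 ^ i) :=
  \col_(k < 2 ^ i) (-1) ^+ (k %/ 2 ^ j).

Definition Amx (R : pzRingType) (n : nat) : 'M[R]_(n.+1, 2 ^ n) :=
  \matrix_(r < n.+1, k < 2 ^ n) onev R n (n - r) k ord0.

(* V_n = Span{1_{n,i} : i = 0..n}, as a row-space (of transposed vectors) *)
Definition Vspan (R : fieldType) (n : nat) : 'M[R]_(2 ^ n) :=
  (\sum_(i < n.+1) <<(onev R n i)^T>>)%MS.

Definition in_Vperp (R : fieldType) (n : nat) (x : 'cV[R]_(2 ^ n)) : Prop :=
  forall v : 'cV[R]_(2 ^ n), ((v^T) <= Vspan R n)%MS -> (v^T *m x) = 0.

Lemma exp2S_add (n : nat) : (2 ^ n + 2 ^ n = 2 ^ n.+1)%N.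
Proof. by rewrite expnS mul2n addnn. Qed.

From mathcomp Require Import all_boot all_order all_algebra.
From mathcomp Require Import zify ring.
Import Order.TTheory GRing.Theory Num.Theory.
Local Open Scope ring_scope.

(* The vectors 1_{n,c} are the Rademacher vectors r_c(k) = (-1)^(bit c of k)
   for c < n, together with the all-ones vector r_n; they are pairwise
   orthogonal of squared norm 2^n.  As (1 - r_c(i) r_c(j))/2 is 1 when the
   c-th bits of i and j differ and 0 otherwise, the distance matrix decomposes
   as 2 D_n = n r_n r_n^T - sum_(c < n) r_c r_c^T, so every r_c is an
   eigenvector with a non-zero eigenvalue.  Hence D_n and V_n have the same
   row space, and the kernels of A_n and D_n, like the orthogonal of V_n,
   consist of the vectors orthogonal to every r_c. *)

Definition rademacher (R : pzRingType) (c k : nat) : R := (-1) ^+ (k %/ 2 ^ c).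

Lemma hdist_lsb n i j :
  hdist n i j = (\sum_(c < n) (odd (i %/ 2 ^ c) != odd (j %/ 2 ^ c)))%N.
Proof.
rewrite /hdist (reindex_inj rev_ord_inj); apply: eq_bigr => c _.
by rewrite /bdigit /=; have -> : (n.-1 - (n - c.+1) = c)%N by have := ltn_ord c; lia.
Qed.

Lemma hdist_blk n (x y : bool) i j : (i < 2 ^ n)%N -> (j < 2 ^ n)%N ->
  hdist n.+1 (x * 2 ^ n + i) (y * 2 ^ n + j) = (hdist n i j + (x != y))%N.
Proof.
move=> hi hj; rewrite !hdist_lsb big_ord_recr /=.
have low (z : bool) k (c : 'I_n) : odd ((z * 2 ^ n + k) %/ 2 ^ c) = odd (k %/ 2 ^ c).
  have -> : (z * 2 ^ n = z * 2 ^ (n - c) * 2 ^ c)%N.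
    by rewrite -mulnA -expnD subnK // ltnW.
  by rewrite divnMDl ?expn_gt0 // oddD oddM oddX subn_eq0 leqNgt ltn_ord andbF.
have top (z : bool) k : (k < 2 ^ n)%N -> odd ((z * 2 ^ n + k) %/ 2 ^ n) = z.
  by move=> hk; rewrite divnMDl ?expn_gt0 // divn_small // addn0 oddb.
by rewrite top // top //; congr (_ + _)%N; apply: eq_bigr => c _; rewrite !low.
Qed.

Section Rademacher.

Variable R : comPzRingType.
Local Notation r := (rademacher R).

Lemma rademacher_small n k : (k < 2 ^ n)%N -> r n k = 1.
Proof. by move=> hk; rewrite /rademacher divn_small. Qed.

Lemma rademacher_pow2D n c k : (c <= n)%N -> r c (2 ^ n + k) = (-1) ^+ (c == n) * r c k.
Proof.
move=> hc; rewrite /rademacher divnDl ?dvdn_exp2l // -expnB // exprD.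
by rewrite -signr_odd oddX orbF subn_eq0 eqn_leq hc.
Qed.

Lemma sum_pow2S n (F : nat -> R) :
  \sum_(k < 2 ^ n.+1) F k = \sum_(k < 2 ^ n) F k + \sum_(k < 2 ^ n) F (2 ^ n + k)%N.
Proof. by rewrite -exp2S_add big_split_ord. Qed.

Lemma sum_rademacher n c : (c < n)%N -> \sum_(k < 2 ^ n) r c k = 0.
Proof.
elim: n => [//|n IHn] hc; rewrite sum_pow2S.
under [X in _ + X]eq_bigr => k _ do rewrite rademacher_pow2D //.
rewrite -mulr_sumr; case: (ltngtP c n) => [lt_cn|lt_nc|->].
- by rewrite IHn // mulr0 addr0.
- lia.
- by rewrite expr1 mulN1r subrr.
Qed.

Lemma sum_rademacherM n a b : (a < b)%N -> (b <= n)%N ->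
  \sum_(k < 2 ^ n) r a k * r b k = 0.
Proof.
elim: n => [|n IHn] hab hb; first lia.
case: (ltngtP b n.+1) => [lt_bn|lt_nb|eq_bn]; last 2 first.
- lia.
- rewrite eq_bn in hab *.
  under eq_bigr => k _ do rewrite (rademacher_small _ _ (ltn_ord k)) mulr1.
  exact: sum_rademacher.
rewrite (sum_pow2S n (fun k => r a k * r b k)).
under [X in _ + X]eq_bigr => k _ do
  rewrite !rademacher_pow2D ?(ltnW (leq_trans hab lt_bn)) // mulrACA.
by rewrite -mulr_sumr IHn ?mulr0 ?addr0.
Qed.

Lemma sum_rademacher_sqr n c : \sum_(k < 2 ^ n) r c k * r c k = (2 ^ n)%:R.
Proof.
under eq_bigr => k _ do rewrite /rademacher -signr_odd -signr_addb addbb expr0.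
by rewrite sumr_const card_ord.
Qed.

Lemma hdist_rademacher n i j :
  2%:R * (hdist n i j)%:R = \sum_(c < n) (1 - r c i * r c j).
Proof.
rewrite hdist_lsb natr_sum mulr_sumr; apply: eq_bigr => c _.
rewrite /rademacher -(signr_odd _ (i %/ _)) -(signr_odd _ (j %/ _)).
by case: (odd _); case: (odd _); rewrite /=; ring.
Qed.

End Rademacher.

Lemma onev_dot (R : comPzRingType) n a b : (a <= n)%N -> (b <= n)%N ->
  (onev R n a)^T *m onev R n b = (if a == b then (2 ^ n)%:R else 0)%:M.
Proof.
move=> ha hb; apply/matrixP => i j; rewrite !ord1 !mxE eqxx mulr1n.
under eq_bigr => k _ do rewrite !mxE.
case: (ltngtP a b) => [lt_ab|lt_ba|->].
- exact: sum_rademacherM.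
- by under eq_bigr => k _ do rewrite mulrC; exact: sum_rademacherM.
- exact: sum_rademacher_sqr.
Qed.

Lemma trmx_Dmx (R : pzRingType) n : (Dmx R n)^T = Dmx R n.
Proof.
apply/matrixP => i j; rewrite !mxE /hdist; congr _%:R.
by apply: eq_bigr => k _; rewrite eq_sym.
Qed.

Lemma scale2_Dmx (R : comPzRingType) n : 2%:R *: Dmx R n =
  n%:R *: (onev R n n *m (onev R n n)^T)
  - \sum_(c < n) onev R n c *m (onev R n c)^T.
Proof.
apply/matrixP => i j; rewrite !mxE summxE big_ord1 !mxE hdist_rademacher.
under [X in _ = _ - X]eq_bigr => c _ do rewrite !mxE big_ord1 !mxE.
rewrite !divn_small // expr0 mulr1 mulr_natl -[n in _ *+ n]card_ord -sumr_const.
by rewrite -sumrB.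
Qed.

Lemma Dmx1 (R : pzRingType) :
  Dmx R 1 = \matrix_(i < 2 ^ 1, j < 2 ^ 1) (if i == j then 0 else 1).
Proof.
apply/matrixP => i j; rewrite !mxE /hdist big_ord1 /bdigit /=.
by case: i => [[|[|//]] ?]; case: j => [[|[|//]] ?].
Qed.

Lemma DmxS (R : pzRingType) n :
  Dmx R n.+1 = castmx (exp2S_add n, exp2S_add n)
    (block_mx (Dmx R n) (Dmx R n + Omx R n) (Dmx R n + Omx R n) (Dmx R n)).
Proof.
apply/matrixP => i j; rewrite castmxE mxE.
set i' := cast_ord _ i; set j' := cast_ord _ j.
rewrite -[i : nat]/(i' : nat) -[j : nat]/(j' : nat) -(splitK i') -(splitK j').
case: (split i') => a; case: (split j') => b;
  rewrite ?(block_mxEul, block_mxEur, block_mxEdl, block_mxEdr) !mxE /=.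
- have := hdist_blk n false false a b (ltn_ord a) (ltn_ord b).
  by rewrite /= addn0 => ->.
- have := hdist_blk n false true a b (ltn_ord a) (ltn_ord b).
  by rewrite /= mul1n => ->; rewrite natrD.
- have := hdist_blk n true false a b (ltn_ord a) (ltn_ord b).
  by rewrite /= mul1n => ->; rewrite natrD.
- have := hdist_blk n true true a b (ltn_ord a) (ltn_ord b).
  by rewrite /= mul1n addn0 => ->.
Qed.

Definition Dmx_eigval (R : pzRingType) n c : R :=
  if c == n then (n * 2 ^ n.-1)%:R else - (2 ^ n.-1)%:R.

Lemma Dmx_eigval_neq0 (R : numDomainType) n c : (0 < n)%N -> Dmx_eigval R n c != 0.
Proof.
move=> n_gt0; rewrite /Dmx_eigval; case: ifP => _; rewrite ?oppr_eq0 pnatr_eq0.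
  by rewrite muln_eq0 expn_eq0 orbF -lt0n n_gt0.
by rewrite expn_eq0.
Qed.

Lemma Dmx_onev (R : numFieldType) n c : (0 < n)%N -> (c <= n)%N ->
  Dmx R n *m onev R n c = Dmx_eigval R n c *: onev R n c.
Proof.
move=> n_gt0 c_le_n; have two_neq0 : (2%:R : R) != 0 by rewrite pnatr_eq0.
have exp2n : (2 ^ n = 2 * 2 ^ n.-1)%N by rewrite -expnS prednK.
apply: (scalerI two_neq0).
rewrite scalemxAl scale2_Dmx mulmxBl mulmx_suml -scalemxAl -mulmxA onev_dot //.
under eq_bigr => b _ do rewrite -mulmxA onev_dot ?mul_mx_scalar ?(ltnW (ltn_ord b)) //.
rewrite mul_mx_scalar scalerA /Dmx_eigval; case: ltngtP c_le_n => // [lt_cn|->] _.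
- rewrite mulr0 scale0r sub0r (bigD1 (Ordinal lt_cn)) //= eqxx big1 => [|b ne_bc].
    by rewrite addr0 scalerA mulrN -natrM -exp2n scaleNr.
  by rewrite -val_eqE /= in ne_bc; rewrite ifN ?scale0r.
- rewrite big1 => [|b _]; last by rewrite ltn_eqF ?scale0r.
  by rewrite subr0 scalerA -!natrM mulnCA -exp2n.
Qed.

Lemma onevT_Dmx (R : numFieldType) n c : (0 < n)%N -> (c <= n)%N ->
  (onev R n c)^T *m Dmx R n = Dmx_eigval R n c *: (onev R n c)^T.
Proof.
by move=> n_gt0 c_le_n; rewrite -[Dmx R n]trmx_Dmx -trmx_mul Dmx_onev // linearZ.
Qed.

Lemma onev_sub_Vspan (R : fieldType) n c :
  (c <= n)%N -> ((onev R n c)^T <= Vspan R n)%MS.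
Proof.
by move=> c_le_n; apply: (sumsmx_sup (Ordinal (c_le_n : c < n.+1)%N)); rewrite ?genmxE.
Qed.

Lemma Dmx_sub_Vspan (R : numFieldType) n : (Dmx R n <= Vspan R n)%MS.
Proof.
have onev_onevT_sub c : (c <= n)%N -> (onev R n c *m (onev R n c)^T <= Vspan R n)%MS.
  by move=> c_le_n; apply: submx_trans (submxMl _ _) _; apply: onev_sub_Vspan.
rewrite -(eqmx_scale _ (_ : 2%:R != 0)) ?pnatr_eq0 // scale2_Dmx.
rewrite addmx_sub ?scalemx_sub ?onev_onevT_sub // -scaleN1r scalemx_sub //.
by apply: summx_sub => c _; apply: onev_onevT_sub; apply: ltnW.
Qed.

Lemma Vspan_sub_Dmx (R : numFieldType) n : (0 < n)%N -> (Vspan R n <= Dmx R n)%MS.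
Proof.
move=> n_gt0; apply/sumsmx_subP => c _; rewrite genmxE.
rewrite -(eqmx_scale _ (Dmx_eigval_neq0 R n c n_gt0)) -onevT_Dmx //.
  exact: submxMl.
by rewrite -ltnS.
Qed.

Definition onev_orthogonal (R : pzRingType) n (x : 'cV[R]_(2 ^ n)) :=
  forall c, (c <= n)%N -> (onev R n c)^T *m x = 0.

Lemma Amx_mulmx_eq0 (R : pzRingType) n (x : 'cV[R]_(2 ^ n)) :
  Amx R n *m x = 0 <-> onev_orthogonal R n x.
Proof.
have rowA r : (Amx R n *m x) r 0 = ((onev R n (n - r))^T *m x) 0 0.
  by rewrite !mxE; apply: eq_bigr => k _; rewrite !mxE.
split=> [Ax0 c c_le_n | x_orth].
- apply/matrixP => i j; rewrite !ord1.
  have := rowA (Ordinal (leq_subr c n : n - c < n.+1)%N).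
  by rewrite Ax0 /= subKn // => <-; rewrite !mxE.
- by apply/matrixP => r j; rewrite ord1 rowA x_orth ?mxE // leq_subr.
Qed.

Lemma Dmx_mulmx_eq0 (R : numFieldType) n (x : 'cV[R]_(2 ^ n)) : (0 < n)%N ->
  Dmx R n *m x = 0 <-> onev_orthogonal R n x.
Proof.
move=> n_gt0; split=> [Dx0 c c_le_n | x_orth].
- apply: (scalerI (Dmx_eigval_neq0 R n c n_gt0)).
  by rewrite scaler0 scalemxAl -onevT_Dmx // -mulmxA Dx0 mulmx0.
- apply: (scalerI (_ : 2%:R != 0)); first by rewrite pnatr_eq0.
  rewrite scaler0 scalemxAl scale2_Dmx mulmxBl mulmx_suml -scalemxAl -mulmxA.
  rewrite x_orth // mulmx0 scaler0 sub0r big1 ?oppr0 // => c _.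
  by rewrite -mulmxA x_orth ?mulmx0 // ltnW.
Qed.

Lemma in_VperpE (R : numFieldType) n (x : 'cV[R]_(2 ^ n)) : (0 < n)%N ->
  in_Vperp R n x <-> onev_orthogonal R n x.
Proof.
move=> n_gt0; split=> [x_perp c c_le_n | x_orth v].
  exact/x_perp/onev_sub_Vspan.
move=> /submx_trans /(_ (Vspan_sub_Dmx _ _ n_gt0)) /submxP[w ->].
by rewrite -mulmxA (proj2 (Dmx_mulmx_eq0 _ _ x n_gt0) x_orth) mulmx0.
Qed.

Theorem lemma4p1 (R : realFieldType) (n : nat) (hn : (1 <= n)%N) :
  (Dmx R 1 = \matrix_(i < 2 ^ 1, j < 2 ^ 1) (if i == j then 0 else 1)
   /\ Dmx R n.+1 =
      castmx (exp2S_add n, exp2S_add n)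
        (block_mx (Dmx R n) (Dmx R n + Omx R n)
                  (Dmx R n + Omx R n) (Dmx R n)))
  /\ (Dmx R n *m onev R n n = (n * 2 ^ n.-1)%:R *: onev R n n
      /\ forall i : nat, (i < n)%N ->
           Dmx R n *m onev R n i = - (2 ^ n.-1)%:R *: onev R n i)
  /\ ((Dmx R n)^T == Vspan R n)%MS
  /\ (forall x : 'cV[R]_(2 ^ n),
        (Amx R n *m x = 0 <-> Dmx R n *m x = 0)
        /\ (Dmx R n *m x = 0 <-> in_Vperp R n x)).
Proof.
split; first by split; [exact: Dmx1 | exact: DmxS].
split.
  split=> [|i lt_in]; rewrite Dmx_onev ?(ltnW lt_in) // /Dmx_eigval ?eqxx //.
  by rewrite ltn_eqF.
split.
  by rewrite trmx_Dmx; apply/andP; split; [exact: Dmx_sub_Vspan | exact: Vspan_sub_Dmx].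
by move=> x; rewrite Amx_mulmx_eq0 Dmx_mulmx_eq0 // in_VperpE.
Qed.
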